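(* Let $d=2\delta$, $H\ge1$, $T_{\max}\ge2$, and consider the orthogonal setting of the context. Let $\theta^*=(\mathtt{A}^*,\mathtt{B}^*,P^* )$ satisfy $\ell(\theta^* )=0$, and set $\mathtt{C}^*=\mathtt{B}^{*\top}\mathtt{A}^*$. Then for every $T\in\{2,\dots,T_{\max}\}$, writing $p^*=(P^*_{T-1,1},\dots,P^*_{T-1,T})$: (i) $p^*_t=0$ for all $t<T-1$; (ii) $p^*_T\,\mathtt{C}^*_{i,i}=1$ for all $i\in\{1,\dots,d\}$; (iii) for every $i\in\{1,\dots,\delta\}$: $p^*_T\mathtt{C}^*_{2i-1,2i}+(\mathtt{C}^*_{2i-1,2i-1}+\mathtt{C}^*_{2i-1,2i})p^*_{T-1}=0$ and $p^*_T\mathtt{C}^*_{2i,2i-1}+(\mathtt{C}^*_{2i,2i}+\mathtt{C}^*_{2i,2i-1})p^*_{T-1}=0$; (iv) $\mathtt{C}^*_{2i-1,j}=\mathtt{C}^*_{2i,j}=0$ for all $i\in\{1,\dots,\delta\}$ and $j\notin\{2i-1,2i\}$.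
   Context: Orthogonal setting: $\mu\in\mathbb{C}^\delta$ has i.i.d. coordinates uniform on the unit circle, $\lambda=(\mu_1,\bar\mu_1,\dots,\mu_\delta,\bar\mu_\delta)\in\mathbb{C}^d$, and $s_t=e_t=\lambda^{t-1}$ (coordinatewise powers). Parameters $\mathtt{A},\mathtt{B}\in\mathbb{R}^{H\times d}$ with rows $a_h,b_h\in\mathbb{R}^d$ and $P\in\mathbb{R}^{T_{\max}\times T_{\max}}$. Model: $\mathcal{T}_\theta(e_{1:T})=\sum_{h=1}^H\sum_{t=1}^T P_{T-1,t}\langle e_t,\mathrm{diag}(a_h)e_{T-1}\rangle_{\mathbb{C}}\mathrm{diag}(b_h)e_t$, $\langle x,y\rangle_{\mathbb{C}}=\sum_i x_i\bar y_i$. Loss: $\ell(\theta)=\sum_{T=2}^{T_{\max}}\mathbb{E}\|\mathcal{T}_\theta(e_{1:T})-s_{T+1}\|^2$ (Hermitian norm). *)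

From Stdlib Require Import Reals Arith.
From Coquelicot Require Import Coquelicot.

Open Scope R_scope.

Definition csum (f : nat -> C) (m n : nat) : C := sum_n_m f m n.
Definition rsum (f : nat -> R) (m n : nat) : R := sum_n_m f m n.

(* Angles phi : nat -> R parametrise mu; mu_k = exp(i phi_k), k = 1..delta. *)
Definition mu (phi : nat -> R) (k : nat) : C := (cos (phi k), sin (phi k)).

(* lambda = (mu_1, conj mu_1, ..., mu_delta, conj mu_delta), 1-based index i. *)
Definition lam (phi : nat -> R) (i : nat) : C :=
  if Nat.odd i then mu phi ((i + 1) / 2) else Cconj (mu phi (i / 2)).

(* e_t = s_t = lambda^(t-1) coordinatewise, t >= 1. *)
Definition e (phi : nat -> R) (t i : nat) : C := pow_n (lam phi i) (t - 1).

Definition cinner (d : nat) (x y : nat -> C) : C :=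
  csum (fun i => Cmult (x i) (Cconj (y i))) 1 d.

(* Parameters: A, B : rows h = 1..H, columns i = 1..d; P indexed 1..Tmax. *)
Definition model (d H : nat) (A B P : nat -> nat -> R) (phi : nat -> R)
    (T i : nat) : C :=
  csum (fun h =>
    csum (fun t =>
      Cmult (Cmult (RtoC (P (T - 1)%nat t))
                   (cinner d (e phi t) (fun j => Cmult (RtoC (A h j)) (e phi (T - 1)%nat j))))
            (Cmult (RtoC (B h i)) (e phi t i))) 1 T) 1 H.

Definition sqerr (d H : nat) (A B P : nat -> nat -> R) (phi : nat -> R) (T : nat) : R :=
  rsum (fun i => (Cmod (Cminus (model d H A B P phi T i) (e phi (T + 1)%nat i))) ^ 2) 1 d.

Definition upd (phi : nat -> R) (k : nat) (x : R) : nat -> R :=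
  fun j => if Nat.eqb j k then x else phi j.

(* Expectation over phi_1, ..., phi_n i.i.d. uniform on [0, 2 pi]
   (i.e. mu_1..mu_n i.i.d. uniform on the unit circle), as an iterated
   normalised integral. *)
Fixpoint expect (n : nat) (f : (nat -> R) -> R) : R :=
  match n with
  | O => f (fun _ => 0)
  | S m => / (2 * PI) *
      RInt (fun x => expect m (fun phi => f (upd phi (S m) x))) 0 (2 * PI)
  end.

Definition loss (delta H Tmax : nat) (A B P : nat -> nat -> R) : R :=
  rsum (fun T => expect delta (fun phi => sqerr (2 * delta) H A B P phi T)) 2 Tmax.

Definition Cmat (H : nat) (A B : nat -> nat -> R) (i j : nat) : R :=
  rsum (fun h => B h i * A h j) 1 H.

(* Zero loss forces each expectation in the loss to vanish; since the squared error is a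
   nonnegative Lipschitz function of the angles, it then vanishes identically, i.e. the model
   reproduces [s_(T+1)] for every choice of angles in [0, 2 pi].  Coordinate [r] of this
   identity is a trigonometric polynomial in the angle x of the conjugate pair of [r]: the
   term of column [j] and position [t] oscillates with frequency [2t - T] for [j = r],
   [T - 2] for the mate of [r], and [t - 1] for every other column (up to the sign of [r]),
   while the target has frequency [T].  Fourier coefficients, computed exactly by averaging
   over [2T + 1] equally spaced angles, then give (ii) at frequency [T], the vanishing of the
   off-pair columns at frequency [T - 1] (hence (iv) after a second extraction in the angle
   of the pair of [j]), (i) at frequency [2t - T], and (iii) at frequency [T - 2]. *)

From Stdlib Require Import Reals Arith Lia Lra ZArith FunctionalExtensionality.
From Coquelicot Require Import Coquelicot.
Open Scope R_scope.

Lemma nat_ind_from (m : nat) (Q : nat -> Prop) :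
  (forall n, (n < m)%nat -> Q n) -> Q m -> (forall n, (m <= n)%nat -> Q n -> Q (S n)) ->
  forall n, Q n.
Proof.
  intros Hlt Hm HS n. induction n as [|n IH].
  - destruct m; [exact Hm|apply Hlt; lia].
  - destruct (lt_eq_lt_dec (S n) m) as [[Hl|<-]|Hg];
      [apply Hlt; lia|exact Hm|apply HS; [lia|exact IH]].
Qed.

Lemma csum_ext f g m n : (forall k, (m <= k <= n)%nat -> f k = g k) -> csum f m n = csum g m n.
Proof. apply sum_n_m_ext_loc. Qed.

Lemma csum_zero f m n : (forall k, (m <= k <= n)%nat -> f k = RtoC 0) -> csum f m n = RtoC 0.
Proof.
  intros Hf. rewrite (csum_ext f (fun _ => zero)) by auto.
  apply (@sum_n_m_const_zero C_AbelianMonoid).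
Qed.

Lemma csum_empty f m n : (n < m)%nat -> csum f m n = RtoC 0.
Proof. exact (@sum_n_m_zero C_AbelianMonoid f m n). Qed.

Lemma csum_n_n f n : csum f n n = f n.
Proof. exact (@sum_n_n C_AbelianMonoid f n). Qed.

Lemma csum_n_Sm f m n : (m <= S n)%nat -> csum f m (S n) = Cplus (csum f m n) (f (S n)).
Proof. exact (@sum_n_Sm C_AbelianMonoid f m n). Qed.

Lemma csum_plus f g m n : csum (fun k => Cplus (f k) (g k)) m n = Cplus (csum f m n) (csum g m n).
Proof. apply (@sum_n_m_plus C_AbelianMonoid). Qed.

Lemma csum_mult_l c f m n : csum (fun k => Cmult c (f k)) m n = Cmult c (csum f m n).
Proof. apply (@sum_n_m_mult_l C_Ring). Qed.

Lemma csum_mult_r c f m n : csum (fun k => Cmult (f k) c) m n = Cmult (csum f m n) c.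
Proof. apply (@sum_n_m_mult_r C_Ring). Qed.

Lemma csum_comm (f : nat -> nat -> C) m1 n1 m2 n2 :
  csum (fun a => csum (fun b => f a b) m2 n2) m1 n1 =
  csum (fun b => csum (fun a => f a b) m1 n1) m2 n2.
Proof.
  induction n1 as [n1 Hn| |n1 Hn IH] using (nat_ind_from m1).
  - rewrite csum_empty by exact Hn. symmetry; apply csum_zero; intros; now apply csum_empty.
  - rewrite csum_n_n. apply csum_ext; intros; now rewrite csum_n_n.
  - rewrite csum_n_Sm, IH, <- csum_plus by lia.
    apply csum_ext; intros; now rewrite csum_n_Sm by lia.
Qed.

Lemma RtoC_rsum f m n : RtoC (rsum f m n) = csum (fun k => RtoC (f k)) m n.
Proof.
  unfold rsum. induction n as [n Hn| |n Hn IH] using (nat_ind_from m).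
  - now rewrite sum_n_m_zero, csum_empty by exact Hn.
  - now rewrite sum_n_n, csum_n_n.
  - rewrite sum_n_Sm, csum_n_Sm, <- IH by lia. apply RtoC_plus.
Qed.

Lemma csum_single f m n j : (m <= j <= n)%nat ->
  (forall k, (m <= k <= n)%nat -> k <> j -> f k = RtoC 0) -> csum f m n = f j.
Proof.
  induction n as [n Hn| |n Hn IH] using (nat_ind_from m); intros Hj Hf.
  - lia.
  - replace j with m by lia. apply csum_n_n.
  - rewrite csum_n_Sm by lia. destruct (Nat.eq_dec j (S n)) as [->|Hne].
    + rewrite csum_zero; [ring|]. intros; apply Hf; lia.
    + rewrite IH, (Hf (S n)); [ring|lia..|]. intros; apply Hf; lia.
Qed.

Lemma sum_n_m_closed {G : AbelianMonoid} {X : Type} (Q : (X -> G) -> Prop) :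
  Q (fun _ => zero) -> (forall f g, Q f -> Q g -> Q (fun x => plus (f x) (g x))) ->
  forall a m n, (forall k, (m <= k <= n)%nat -> Q (a k)) ->
  Q (fun x => sum_n_m (fun k => a k x) m n).
Proof.
  intros Q0 QD a m n.
  induction n as [n Hn| |n Hn IH] using (nat_ind_from m); intros Ha.
  - replace (fun x => _) with (fun _ : X => @zero G); [exact Q0|].
    apply functional_extensionality; intros; now rewrite sum_n_m_zero.
  - replace (fun x => _) with (a m); [apply Ha; lia|].
    apply functional_extensionality; intros; now rewrite sum_n_n.
  - replace (fun x => _) with (fun x => plus (sum_n_m (fun k => a k x) m n) (a (S n) x)).
    + apply QD; [apply IH|apply Ha]; intros; try apply Ha; lia.
    + apply functional_extensionality; intros; now rewrite sum_n_Sm by lia.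
Qed.

Lemma rsum_nonneg a m n : (forall k, (m <= k <= n)%nat -> 0 <= a k) -> 0 <= rsum a m n.
Proof.
  unfold rsum. induction n as [n Hn| |n Hn IH] using (nat_ind_from m); intros Ha.
  - rewrite sum_n_m_zero by exact Hn. apply Rle_refl.
  - rewrite sum_n_n. apply Ha; lia.
  - rewrite sum_n_Sm by lia.
    apply Rplus_le_le_0_compat; [apply IH|apply Ha]; intros; try apply Ha; lia.
Qed.

Lemma rsum_term_le a m n j : (forall k, (m <= k <= n)%nat -> 0 <= a k) ->
  (m <= j <= n)%nat -> a j <= rsum a m n.
Proof.
  intros Ha Hj. unfold rsum. rewrite (sum_n_m_Chasles a m j n) by lia.
  assert (Hrest : 0 <= sum_n_m a (S j) n) by (apply rsum_nonneg; intros; apply Ha; lia).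
  change plus with Rplus. enough (a j <= sum_n_m a m j) by lra.
  destruct (Nat.eq_dec m j) as [->|Hne]; [rewrite sum_n_n; lra|].
  destruct j as [|j]; [lia|]. rewrite sum_n_Sm by lia.
  assert (0 <= sum_n_m a m j) by (apply rsum_nonneg; intros; apply Ha; lia).
  change plus with Rplus; lra.
Qed.

Definition cis (y : R) : C := (cos y, sin y).

Lemma cis_add a b : Cmult (cis a) (cis b) = cis (a + b).
Proof. unfold cis, Cmult; simpl. rewrite cos_plus, sin_plus. f_equal; ring. Qed.

Lemma cis_conj a : Cconj (cis a) = cis (- a).
Proof. unfold cis, Cconj; simpl. now rewrite cos_neg, sin_neg. Qed.

Lemma cis_0 : cis 0 = RtoC 1.
Proof. unfold cis, RtoC. now rewrite cos_0, sin_0. Qed.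

Lemma cis_pow_n a n : pow_n (cis a) n = cis (INR n * a).
Proof.
  induction n as [|n IH]; [simpl; now rewrite Rmult_0_l, cis_0|].
  change (pow_n (cis a) (S n)) with (Cmult (cis a) (pow_n (cis a) n)).
  rewrite IH, cis_add, S_INR. f_equal; ring.
Qed.

Lemma cis_IZR_mul_2PI q : cis (IZR q * (2 * PI)) = RtoC 1.
Proof.
  assert (Hs : sin (IZR q * PI) = 0) by (apply sin_eq_0_1; now exists q).
  replace (IZR q * (2 * PI)) with (2 * (IZR q * PI)) by ring.
  unfold cis, RtoC. rewrite cos_2a_sin, sin_2a, Hs. f_equal; ring.
Qed.

(* Coordinates [2i-1] and [2i] of [lam] form the conjugate pair [i]; [angle p j] is the
   argument of [lam p j]. *)
Definition pair_idx (j : nat) : nat := ((j + 1) / 2)%nat.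
Definition sgn (j : nat) : Z := if Nat.odd j then 1%Z else (-1)%Z.
Definition mate (j : nat) : nat := if Nat.odd j then S j else pred j.
Definition angle (p : nat -> R) (j : nat) : R := IZR (sgn j) * p (pair_idx j).

Lemma pair_idx_odd q : pair_idx (2 * q + 1) = S q.
Proof.
  unfold pair_idx. replace (2 * q + 1 + 1)%nat with (S q * 2)%nat by lia.
  apply Nat.div_mul; lia.
Qed.

Lemma pair_idx_even q : pair_idx (2 * q) = q.
Proof.
  unfold pair_idx. replace (2 * q + 1)%nat with (1 + q * 2)%nat by lia.
  now rewrite Nat.div_add by lia.
Qed.

Lemma sgn_odd q : sgn (2 * q + 1) = 1%Z.
Proof. unfold sgn; now rewrite Nat.odd_odd. Qed.

Lemma sgn_even q : sgn (2 * q) = (-1)%Z.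
Proof. unfold sgn; now rewrite Nat.odd_even. Qed.

Lemma mate_odd q : mate (2 * q + 1) = (2 * q + 2)%nat.
Proof. unfold mate; rewrite Nat.odd_odd; lia. Qed.

Lemma mate_even q : mate (2 * q) = (2 * q - 1)%nat.
Proof. unfold mate; rewrite Nat.odd_even; lia. Qed.

Ltac parity j :=
  destruct (Nat.Even_or_Odd j) as [[?q ->]|[?q ->]];
  rewrite ?pair_idx_odd, ?pair_idx_even, ?sgn_odd, ?sgn_even, ?mate_odd, ?mate_even in *.

Lemma sgn_cases j : sgn j = 1%Z \/ sgn j = (-1)%Z.
Proof. unfold sgn; destruct (Nat.odd j); auto. Qed.

Lemma pair_idx_range d j : (1 <= j <= 2 * d)%nat -> (1 <= pair_idx j <= d)%nat.
Proof. intros; parity j; lia. Qed.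

Lemma pair_idx_sgn_inj j j' : (1 <= j)%nat -> (1 <= j')%nat ->
  pair_idx j = pair_idx j' -> sgn j = sgn j' -> j = j'.
Proof. intros; parity j; parity j'; lia. Qed.

Lemma mate_range d r : (1 <= r <= 2 * d)%nat -> (1 <= mate r <= 2 * d)%nat.
Proof. intros; parity r; lia. Qed.

Lemma mate_neq r : (1 <= r)%nat -> mate r <> r.
Proof. intros; parity r; lia. Qed.

Lemma pair_idx_mate r : (1 <= r)%nat -> pair_idx (mate r) = pair_idx r.
Proof.
  intros; parity r.
  - replace (2 * q - 1)%nat with (2 * (q - 1) + 1)%nat by lia. rewrite pair_idx_odd; lia.
  - replace (2 * q + 2)%nat with (2 * S q)%nat by lia. now rewrite pair_idx_even.
Qed.

Lemma sgn_mate r : (1 <= r)%nat -> sgn (mate r) = (- sgn r)%Z.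
Proof.
  intros; parity r.
  - replace (2 * q - 1)%nat with (2 * (q - 1) + 1)%nat by lia. now rewrite sgn_odd.
  - replace (2 * q + 2)%nat with (2 * S q)%nat by lia. now rewrite sgn_even.
Qed.

Lemma pair_idx_eq_cases j r : (1 <= j)%nat -> (1 <= r)%nat ->
  pair_idx j = pair_idx r -> j = r \/ j = mate r.
Proof. intros; parity j; parity r; lia. Qed.

Lemma pair_idx_pred_double i : (1 <= i)%nat -> pair_idx (2 * i - 1) = i.
Proof.
  intros. replace (2 * i - 1)%nat with (2 * (i - 1) + 1)%nat by lia. rewrite pair_idx_odd; lia.
Qed.

Lemma mate_pred_double i : (1 <= i)%nat -> mate (2 * i - 1) = (2 * i)%nat.
Proof.
  intros. replace (2 * i - 1)%nat with (2 * (i - 1) + 1)%nat by lia. rewrite mate_odd; lia.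
Qed.

Lemma pair_idx_neq j i :
  (1 <= j)%nat -> j <> (2 * i - 1)%nat -> j <> (2 * i)%nat -> pair_idx j <> i.
Proof. intros; parity j; lia. Qed.

Lemma lam_pair_idx p j :
  lam p j = if Nat.odd j then mu p (pair_idx j) else Cconj (mu p (pair_idx j)).
Proof.
  unfold lam. destruct (Nat.odd j) eqn:Hj; [reflexivity|].
  parity j; [|now rewrite Nat.odd_odd in Hj].
  now rewrite (Nat.mul_comm 2 q), Nat.div_mul by lia.
Qed.

Lemma lam_cis p j : lam p j = cis (angle p j).
Proof.
  rewrite lam_pair_idx. unfold angle, sgn, mu.
  destruct (Nat.odd j); change (cos (p (pair_idx j)), sin (p (pair_idx j)))
    with (cis (p (pair_idx j))); [now rewrite Rmult_1_l|].
  rewrite cis_conj. f_equal; ring.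
Qed.

Lemma angle_upd_same p l x j : pair_idx j = l -> angle (upd p l x) j = IZR (sgn j) * x.
Proof. intros <-. unfold angle, upd. now rewrite Nat.eqb_refl. Qed.

Lemma angle_upd_other p l x j : pair_idx j <> l -> angle (upd p l x) j = angle p j.
Proof. intros Hj. unfold angle, upd. now destruct (Nat.eqb_spec (pair_idx j) l). Qed.

Lemma Z_eqb_sgn_mul j a b : Z.eqb (sgn j * a) (sgn j * b) = Z.eqb a b.
Proof.
  apply Bool.eq_iff_eq_true. rewrite !Z.eqb_eq.
  destruct (sgn_cases j) as [-> | ->]; lia.
Qed.

Lemma csum_split_pair g d r : (1 <= r <= 2 * d)%nat ->
  csum g 1 (2 * d) =
  Cplus (g r) (Cplus (g (mate r))
    (csum (fun j => if Nat.eqb (pair_idx j) (pair_idx r) then RtoC 0 else g j) 1 (2 * d))).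
Proof.
  intros Hr. pose proof (mate_range d r Hr). pose proof (mate_neq r ltac:(lia)).
  rewrite (csum_ext g (fun j => Cplus (if Nat.eqb j r then g r else RtoC 0)
     (Cplus (if Nat.eqb j (mate r) then g (mate r) else RtoC 0)
            (if Nat.eqb (pair_idx j) (pair_idx r) then RtoC 0 else g j)))).
  - rewrite !csum_plus. f_equal; [|f_equal].
    + rewrite (csum_single _ 1 (2 * d) r), Nat.eqb_refl by
        (lia || (intros j _ Hj; now destruct (Nat.eqb_spec j r))). reflexivity.
    + rewrite (csum_single _ 1 (2 * d) (mate r)), Nat.eqb_refl by
        (lia || (intros j _ Hj; now destruct (Nat.eqb_spec j (mate r)))). reflexivity.
  - intros j Hj. destruct (Nat.eqb_spec (pair_idx j) (pair_idx r)) as [E|E].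
    + destruct (pair_idx_eq_cases j r ltac:(lia) ltac:(lia) E) as [->| ->].
      * rewrite Nat.eqb_refl. destruct (Nat.eqb_spec r (mate r)); [lia|]. ring.
      * rewrite Nat.eqb_refl. destruct (Nat.eqb_spec (mate r) r); [lia|]. ring.
    + destruct (Nat.eqb_spec j r) as [->|]; [easy|].
      destruct (Nat.eqb_spec j (mate r)) as [->|]; [now rewrite pair_idx_mate in E by lia|]. ring.
Qed.

Fixpoint l1dist (K : nat) (p q : nat -> R) : R :=
  match K with
  | O => 0
  | S K' => Rabs (p K - q K) + l1dist K' p q
  end.

Lemma l1dist_nonneg K p q : 0 <= l1dist K p q.
Proof.
  induction K as [|K IH]; simpl; [lra|].
  pose proof (Rabs_pos (p (S K) - q (S K))); lra.
Qed.

Lemma l1dist_upd K p q k x : l1dist K (upd p k x) (upd q k x) <= l1dist K p q.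
Proof.
  induction K as [|K IH]; simpl; [lra|].
  unfold upd at 1 2; destruct (Nat.eqb (S K) k); [|lra].
  rewrite Rminus_diag, Rabs_R0. pose proof (Rabs_pos (p (S K) - q (S K))); lra.
Qed.

Lemma l1dist_upd_out K p k x y : (K < k)%nat -> l1dist K (upd p k x) (upd p k y) = 0.
Proof.
  induction K as [|K IH]; intros HK; simpl; [lra|].
  unfold upd at 1 2; destruct (Nat.eqb_spec (S K) k); [lia|].
  rewrite IH, Rminus_diag, Rabs_R0 by lia; lra.
Qed.

Lemma l1dist_upd_le K p k x y : l1dist K (upd p k x) (upd p k y) <= Rabs (x - y).
Proof.
  induction K as [|K IH]; simpl; [apply Rabs_pos|].
  unfold upd at 1 2; destruct (Nat.eqb_spec (S K) k).
  - rewrite l1dist_upd_out by lia; lra.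
  - rewrite Rminus_diag, Rabs_R0; lra.
Qed.

Lemma Rabs_coord_le_l1dist K p q k :
  (1 <= k <= K)%nat -> Rabs (p k - q k) <= l1dist K p q.
Proof.
  induction K as [|K IH]; intros Hk; [lia|]. simpl.
  destruct (Nat.eq_dec k (S K)) as [->|Hne].
  - pose proof (l1dist_nonneg K p q); lra.
  - pose proof (Rabs_pos (p (S K) - q (S K))); pose proof (IH ltac:(lia)); lra.
Qed.

Definition lipschitz (K : nat) (f : (nat -> R) -> R) : Prop :=
  exists L, 0 <= L /\ forall p q, Rabs (f p - f q) <= L * l1dist K p q.

Definition lipschitz_R (F : R -> R) : Prop :=
  exists L, 0 <= L /\ forall a b, Rabs (F a - F b) <= L * Rabs (a - b).

Lemma lipschitz_upd K f k x : lipschitz K f -> lipschitz K (fun p => f (upd p k x)).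
Proof.
  intros [L [HL Hf]]. exists L; split; [exact HL|]. intros p q.
  eapply Rle_trans; [apply Hf|]. apply Rmult_le_compat_l; [exact HL|apply l1dist_upd].
Qed.

Lemma lipschitz_R_continuous F x : lipschitz_R F -> continuous F x.
Proof.
  intros [L [HL HF]]. apply continuity_pt_filterlim. intros eps Heps.
  exists (eps / (L + 1)). split; [apply Rdiv_lt_0_compat; lra|].
  intros y [_ Hy]. simpl in *. unfold R_dist in *.
  apply Rle_lt_trans with ((L + 1) * Rabs (y - x)).
  - eapply Rle_trans; [apply HF|]. apply Rmult_le_compat_r; [apply Rabs_pos|lra].
  - apply Rlt_le_trans with ((L + 1) * (eps / (L + 1))).
    + apply Rmult_lt_compat_l; lra.
    + right; field; lra.
Qed.

Lemma lipschitz_R_ex_RInt F a b : lipschitz_R F -> ex_RInt F a b.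
Proof.
  intros HF. apply (@ex_RInt_continuous R_CompleteNormedModule).
  intros x _. now apply lipschitz_R_continuous.
Qed.

Lemma PI2_pos : 0 < 2 * PI.
Proof. pose proof PI_RGT_0; lra. Qed.

Section Expectation.
Variable K : nat.

(* Parametrised by the contraction property at level [n], which [Rabs_expect_minus_le] then
   proves by induction using this lemma for the integrability of the slices. *)
Lemma slice_lipschitz n f :
  (forall g h eps, lipschitz K g -> lipschitz K h -> (forall p, Rabs (g p - h p) <= eps) ->
     Rabs (expect n g - expect n h) <= eps) ->
  lipschitz K f -> lipschitz_R (fun x => expect n (fun p => f (upd p (S n) x))).
Proof.
  intros Hcontr Hf. pose proof Hf as [L [HL Hf']]. exists L; split; [exact HL|].
  intros a b. apply Hcontr; try now apply lipschitz_upd.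
  intros p. eapply Rle_trans; [apply Hf'|].
  apply Rmult_le_compat_l; [exact HL|apply l1dist_upd_le].
Qed.

Lemma Rabs_expect_minus_le n : forall f g eps,
  lipschitz K f -> lipschitz K g -> (forall p, Rabs (f p - g p) <= eps) ->
  Rabs (expect n f - expect n g) <= eps.
Proof.
  induction n as [|n IH]; intros f g eps Hf Hg Hfg; simpl; [apply Hfg|].
  set (F := fun x => expect n (fun p => f (upd p (S n) x))).
  set (G := fun x => expect n (fun p => g (upd p (S n) x))).
  assert (HiF : ex_RInt F 0 (2 * PI)) by now apply lipschitz_R_ex_RInt, slice_lipschitz.
  assert (HiG : ex_RInt G 0 (2 * PI)) by now apply lipschitz_R_ex_RInt, slice_lipschitz.
  pose proof PI2_pos.
  rewrite <- Rmult_minus_distr_l, <- (RInt_minus F G) by assumption.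
  rewrite Rabs_mult, Rabs_right by (apply Rle_ge, Rlt_le, Rinv_0_lt_compat; lra).
  assert (Hint : Rabs (RInt (fun x => F x - G x) 0 (2 * PI)) <= (2 * PI - 0) * eps).
  { apply abs_RInt_le_const; [lra|now apply (ex_RInt_minus F G)|].
    intros x _. apply IH; try apply lipschitz_upd; auto. }
  apply Rle_trans with (/ (2 * PI) * ((2 * PI - 0) * eps)).
  - apply Rmult_le_compat_l; [apply Rlt_le, Rinv_0_lt_compat; lra|exact Hint].
  - right; field; lra.
Qed.

Lemma expect_slice_lipschitz n f :
  lipschitz K f -> lipschitz_R (fun x => expect n (fun p => f (upd p (S n) x))).
Proof. apply slice_lipschitz, Rabs_expect_minus_le. Qed.

Lemma expect_nonneg n : forall f, lipschitz K f -> (forall p, 0 <= f p) -> 0 <= expect n f.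
Proof.
  induction n as [|n IH]; intros f Hf Hpos; simpl; [apply Hpos|].
  pose proof PI2_pos.
  apply Rmult_le_pos; [apply Rlt_le, Rinv_0_lt_compat; lra|].
  apply RInt_ge_0; [lra|now apply lipschitz_R_ex_RInt, expect_slice_lipschitz|].
  intros x _. apply IH; [now apply lipschitz_upd|intros; apply Hpos].
Qed.

End Expectation.

Lemma RInt_eq0_nonneg_cont (F : R -> R) a b :
  (forall x, continuous F x) -> (forall x, 0 <= F x) -> a < b -> RInt F a b = 0 ->
  forall x, a <= x <= b -> F x = 0.
Proof.
  intros Hc Hpos Hab Hint x0 Hx0.
  destruct (Hpos x0) as [Hgt|]; [exfalso|auto].
  destruct (proj2 (continuity_pt_filterlim F x0) (Hc x0) (F x0 / 2)) as [r [Hr Hnear]]; [lra|].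
  set (a' := Rmax a (x0 - r / 2)). set (b' := Rmin b (x0 + r / 2)).
  assert (Ha' : a <= a' <= x0) by (unfold a', Rmax; destruct Rle_dec; lra).
  assert (Hb' : x0 <= b' <= b) by (unfold b', Rmin; destruct Rle_dec; lra).
  assert (Hab' : a' < b') by (unfold a', b', Rmax, Rmin; repeat destruct Rle_dec; lra).
  assert (Hex : forall u v, ex_RInt F u v)
    by (intros; apply (@ex_RInt_continuous R_CompleteNormedModule); auto).
  assert (Hmid : 0 < RInt F a' b').
  { apply RInt_gt_0; auto. intros x Hx.
    destruct (Req_dec x x0) as [->|Hne]; [exact Hgt|].
    assert (Hd : R_dist (F x) (F x0) < F x0 / 2).
    { apply Hnear. split; [split; [exact I|auto]|]. unfold R_dist, a', b', Rmax, Rmin in *.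
      apply Rabs_def1; repeat destruct Rle_dec; lra. }
    unfold R_dist in Hd. apply Rabs_def2 in Hd. lra. }
  assert (Hl : 0 <= RInt F a a') by (apply RInt_ge_0; auto; lra).
  assert (Hr' : 0 <= RInt F b' b) by (apply RInt_ge_0; auto; lra).
  rewrite <- (RInt_Chasles F a a' b), <- (RInt_Chasles F a' b' b) in Hint by auto.
  change plus with Rplus in Hint. lra.
Qed.

(* Outside the integrated coordinates [expect] evaluates at [0], hence the second clause. *)
Definition angles (n : nat) (p : nat -> R) : Prop :=
  (forall k, (1 <= k <= n)%nat -> 0 <= p k <= 2 * PI) /\
  (forall k, (k = 0 \/ n < k)%nat -> p k = 0).

Lemma angles_zero n : angles n (fun _ => 0).
Proof. split; intros; [pose proof PI_RGT_0; lra|reflexivity]. Qed.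

Lemma angles_upd n p k x :
  angles n p -> (1 <= k <= n)%nat -> 0 <= x <= 2 * PI -> angles n (upd p k x).
Proof.
  intros [Hin Hout] Hk Hx. split; intros j Hj; unfold upd;
    destruct (Nat.eqb_spec j k); auto; lia.
Qed.

Lemma expect_eq0_pointwise K n : forall f,
  lipschitz K f -> (forall p, 0 <= f p) -> expect n f = 0 ->
  forall p, angles n p -> f p = 0.
Proof.
  induction n as [|n IH]; intros f Hf Hpos Hzero p [Hin Hout]; simpl in Hzero.
  - replace p with (fun _ : nat => 0); [exact Hzero|].
    apply functional_extensionality; intros k; rewrite Hout; auto; lia.
  - pose proof PI2_pos as Hpi.
    assert (Hint : RInt (fun x => expect n (fun q => f (upd q (S n) x))) 0 (2 * PI) = 0).
    { apply Rmult_integral in Hzero as [Hinv|]; [|assumption].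
      pose proof (Rinv_0_lt_compat (2 * PI) ltac:(lra)); lra. }
    assert (Hslice := RInt_eq0_nonneg_cont _ 0 (2 * PI)
      (fun x => lipschitz_R_continuous _ x (expect_slice_lipschitz K n f Hf))
      (fun x => expect_nonneg K n _ (lipschitz_upd K f _ x Hf) (fun q => Hpos _))
      Hpi Hint (p (S n)) (Hin (S n) ltac:(lia))).
    replace p with (upd (upd p (S n) 0) (S n) (p (S n))).
    + apply (IH (fun q => f (upd q (S n) (p (S n))))); auto using lipschitz_upd.
      split; intros k Hk; unfold upd; destruct (Nat.eqb_spec k (S n));
        [lra|apply Hin; lia|reflexivity|apply Hout; lia].
    + apply functional_extensionality; intros k; unfold upd.
      destruct (Nat.eqb_spec k (S n)); congruence.
Qed.

Definition bdd_lipschitz (K : nat) (f : (nat -> R) -> R) : Prop :=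
  (exists M, forall p, Rabs (f p) <= M) /\ lipschitz K f.

Section BoundedLipschitz.
Variable K : nat.

Lemma bdd_lipschitz_const c : bdd_lipschitz K (fun _ => c).
Proof.
  split; [exists (Rabs c); intros; lra|exists 0; split; [lra|]].
  intros; rewrite Rminus_diag, Rabs_R0, Rmult_0_l; lra.
Qed.

Lemma bdd_lipschitz_plus f g :
  bdd_lipschitz K f -> bdd_lipschitz K g -> bdd_lipschitz K (fun p => f p + g p).
Proof.
  intros [[M1 B1] [L1 [HL1 H1]]] [[M2 B2] [L2 [HL2 H2]]]. split.
  - exists (M1 + M2); intros p. eapply Rle_trans; [apply Rabs_triang|].
    specialize (B1 p); specialize (B2 p); lra.
  - exists (L1 + L2); split; [lra|]. intros p q.
    replace (f p + g p - (f q + g q)) with ((f p - f q) + (g p - g q)) by ring.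
    eapply Rle_trans; [apply Rabs_triang|]. specialize (H1 p q); specialize (H2 p q); lra.
Qed.

Lemma bdd_lipschitz_opp f : bdd_lipschitz K f -> bdd_lipschitz K (fun p => - f p).
Proof.
  intros [[M B] [L [HL Hf]]]. split; [exists M; intros; rewrite Rabs_Ropp; auto|].
  exists L; split; [exact HL|]. intros p q.
  replace (- f p - - f q) with (- (f p - f q)) by ring. rewrite Rabs_Ropp; auto.
Qed.

Lemma bdd_lipschitz_mult f g :
  bdd_lipschitz K f -> bdd_lipschitz K g -> bdd_lipschitz K (fun p => f p * g p).
Proof.
  intros [[M1 B1] [L1 [HL1 H1]]] [[M2 B2] [L2 [HL2 H2]]].
  assert (HM1 : 0 <= M1) by (eapply Rle_trans; [apply Rabs_pos|apply (B1 (fun _ => 0))]).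
  assert (HM2 : 0 <= M2) by (eapply Rle_trans; [apply Rabs_pos|apply (B2 (fun _ => 0))]).
  split;
    [exists (M1 * M2); intros p; rewrite Rabs_mult; apply Rmult_le_compat; auto using Rabs_pos|].
  exists (M1 * L2 + M2 * L1); split; [nra|]. intros p q.
  replace (f p * g p - f q * g q) with (f p * (g p - g q) + g q * (f p - f q)) by ring.
  eapply Rle_trans; [apply Rabs_triang|]. rewrite !Rabs_mult.
  pose proof (l1dist_nonneg K p q).
  assert (Rabs (f p) * Rabs (g p - g q) <= M1 * (L2 * l1dist K p q))
    by (apply Rmult_le_compat; auto using Rabs_pos).
  assert (Rabs (g q) * Rabs (f p - f q) <= M2 * (L1 * l1dist K p q))
    by (apply Rmult_le_compat; auto using Rabs_pos).
  nra.
Qed.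

Lemma bdd_lipschitz_coord_comp (F : R -> R) k :
  (forall x, Rabs (F x) <= 1) -> (forall a b, Rabs (F a - F b) <= Rabs (a - b)) ->
  (1 <= k <= K)%nat -> bdd_lipschitz K (fun p => F (p k)).
Proof.
  intros Hb Hl Hk. split; [exists 1; auto|exists 1; split; [lra|]].
  intros p q. rewrite Rmult_1_l. eapply Rle_trans; [apply Hl|].
  now apply Rabs_coord_le_l1dist.
Qed.

End BoundedLipschitz.

Lemma cos_lipschitz a b : Rabs (cos a - cos b) <= Rabs (a - b).
Proof.
  destruct (MVT_abs cos (fun x => - sin x) b a) as [c [-> _]];
    [intros; apply derivable_pt_lim_cos|].
  rewrite Rabs_Ropp. pose proof (SIN_bound c).
  assert (Rabs (sin c) <= 1) by (apply Rabs_le; lra).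
  pose proof (Rabs_pos (a - b)). nra.
Qed.

Lemma sin_lipschitz a b : Rabs (sin a - sin b) <= Rabs (a - b).
Proof.
  destruct (MVT_abs sin cos b a) as [c [-> _]]; [intros; apply derivable_pt_lim_sin|].
  pose proof (COS_bound c).
  assert (Rabs (cos c) <= 1) by (apply Rabs_le; lra).
  pose proof (Rabs_pos (a - b)). nra.
Qed.

Lemma bdd_lipschitz_rsum K a m n : (forall k, (m <= k <= n)%nat -> bdd_lipschitz K (a k)) ->
  bdd_lipschitz K (fun p => rsum (fun k => a k p) m n).
Proof.
  apply (@sum_n_m_closed R_AbelianMonoid). apply bdd_lipschitz_const.
  intros; now apply bdd_lipschitz_plus.
Qed.

Definition Cbdd_lipschitz (K : nat) (g : (nat -> R) -> C) : Prop :=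
  bdd_lipschitz K (fun p => fst (g p)) /\ bdd_lipschitz K (fun p => snd (g p)).

Section ComplexBoundedLipschitz.
Variable K : nat.

Lemma Cbdd_lipschitz_const c : Cbdd_lipschitz K (fun _ => c).
Proof. split; apply bdd_lipschitz_const. Qed.

Lemma Cbdd_lipschitz_plus f g :
  Cbdd_lipschitz K f -> Cbdd_lipschitz K g -> Cbdd_lipschitz K (fun p => Cplus (f p) (g p)).
Proof. intros [] []; split; simpl; now apply bdd_lipschitz_plus. Qed.

Lemma Cbdd_lipschitz_minus f g :
  Cbdd_lipschitz K f -> Cbdd_lipschitz K g -> Cbdd_lipschitz K (fun p => Cminus (f p) (g p)).
Proof. intros [] []; split; simpl; apply bdd_lipschitz_plus; auto; now apply bdd_lipschitz_opp. Qed.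

Lemma Cbdd_lipschitz_mult f g :
  Cbdd_lipschitz K f -> Cbdd_lipschitz K g -> Cbdd_lipschitz K (fun p => Cmult (f p) (g p)).
Proof.
  intros [] []; split; simpl; apply bdd_lipschitz_plus;
    try apply bdd_lipschitz_opp; now apply bdd_lipschitz_mult.
Qed.

Lemma Cbdd_lipschitz_conj f : Cbdd_lipschitz K f -> Cbdd_lipschitz K (fun p => Cconj (f p)).
Proof. intros []; split; simpl; auto; now apply bdd_lipschitz_opp. Qed.

Lemma Cbdd_lipschitz_pow_n f n : Cbdd_lipschitz K f -> Cbdd_lipschitz K (fun p => pow_n (f p) n).
Proof.
  intros Hf. induction n as [|n IH]; simpl; [apply Cbdd_lipschitz_const|].
  now apply (Cbdd_lipschitz_mult f (fun p => pow_n (f p) n)).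
Qed.

Lemma Cbdd_lipschitz_csum a m n : (forall k, (m <= k <= n)%nat -> Cbdd_lipschitz K (a k)) ->
  Cbdd_lipschitz K (fun p => csum (fun k => a k p) m n).
Proof.
  apply (@sum_n_m_closed C_AbelianMonoid). apply Cbdd_lipschitz_const.
  intros; now apply Cbdd_lipschitz_plus.
Qed.

Lemma Cbdd_lipschitz_e t j : (1 <= j <= 2 * K)%nat -> Cbdd_lipschitz K (fun p => e p t j).
Proof.
  intros Hj. apply Cbdd_lipschitz_pow_n.
  assert (Hmu : Cbdd_lipschitz K (fun p => mu p (pair_idx j))).
  { split; apply bdd_lipschitz_coord_comp; auto using pair_idx_range, cos_lipschitz, sin_lipschitz;
      intros; apply Rabs_le; [apply COS_bound|apply SIN_bound]. }
  replace (fun p => lam p j)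
    with (fun p => if Nat.odd j then mu p (pair_idx j) else Cconj (mu p (pair_idx j)))
    by (apply functional_extensionality; intros; now rewrite lam_pair_idx).
  destruct (Nat.odd j); [|apply Cbdd_lipschitz_conj]; exact Hmu.
Qed.

End ComplexBoundedLipschitz.

Lemma Cmod_sqr z : Cmod z ^ 2 = fst z * fst z + snd z * snd z.
Proof.
  unfold Cmod. rewrite pow2_sqrt; [ring|].
  pose proof (pow2_ge_0 (fst z)); pose proof (pow2_ge_0 (snd z)); lra.
Qed.

Lemma bdd_lipschitz_Cmod_sqr K g : Cbdd_lipschitz K g -> bdd_lipschitz K (fun p => Cmod (g p) ^ 2).
Proof.
  intros [Hre Him].
  replace (fun p => Cmod (g p) ^ 2) with (fun p => fst (g p) * fst (g p) + snd (g p) * snd (g p))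
    by (apply functional_extensionality; intros; now rewrite Cmod_sqr).
  apply bdd_lipschitz_plus; now apply bdd_lipschitz_mult.
Qed.

Lemma sqerr_bdd_lipschitz K H A B P T : bdd_lipschitz K (fun p => sqerr (2 * K) H A B P p T).
Proof.
  apply bdd_lipschitz_rsum. intros i Hi. apply bdd_lipschitz_Cmod_sqr.
  apply Cbdd_lipschitz_minus; [|apply Cbdd_lipschitz_e; lia].
  apply Cbdd_lipschitz_csum; intros h _; apply Cbdd_lipschitz_csum; intros t _.
  repeat apply Cbdd_lipschitz_mult; try apply Cbdd_lipschitz_const;
    try (apply Cbdd_lipschitz_e; lia).
  apply Cbdd_lipschitz_csum; intros j Hj. apply Cbdd_lipschitz_mult;
    [|apply Cbdd_lipschitz_conj, Cbdd_lipschitz_mult; [apply Cbdd_lipschitz_const|]];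
    apply Cbdd_lipschitz_e; lia.
Qed.

Lemma sqerr_nonneg d H A B P p T : 0 <= sqerr d H A B P p T.
Proof. apply rsum_nonneg. intros; apply pow2_ge_0. Qed.

Lemma sqerr_eq0_model d H A B P p T i : (1 <= i <= d)%nat ->
  sqerr d H A B P p T = 0 -> model d H A B P p T i = e p (T + 1) i.
Proof.
  intros Hi Hzero. set (z := Cminus (model d H A B P p T i) (e p (T + 1) i)).
  assert (Hz : Cmod z ^ 2 <= 0).
  { rewrite <- Hzero. unfold z, sqerr.
    apply (rsum_term_le (fun i => Cmod (Cminus (model d H A B P p T i) (e p (T + 1) i)) ^ 2));
      auto using pow2_ge_0. }
  assert (Hz0 : z = 0) by (apply Cmod_eq_0; pose proof (Cmod_ge_0 z); nra).
  replace (model d H A B P p T i) with (Cplus z (e p (T + 1) i)) by (unfold z; ring).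
  rewrite Hz0. ring.
Qed.

Lemma zero_loss_model_eq delta H Tmax A B P : loss delta H Tmax A B P = 0 ->
  forall T, (2 <= T <= Tmax)%nat -> forall p, angles delta p ->
  forall i, (1 <= i <= 2 * delta)%nat -> model (2 * delta) H A B P p T i = e p (T + 1) i.
Proof.
  intros Hloss T HT p Hp i Hi. apply sqerr_eq0_model; [exact Hi|].
  set (E T := expect delta (fun q => sqerr (2 * delta) H A B P q T)).
  assert (Hlip : forall T, lipschitz delta (fun q => sqerr (2 * delta) H A B P q T))
    by (intros; apply sqerr_bdd_lipschitz).
  assert (HE : forall T, 0 <= E T)
    by (intros; apply (expect_nonneg delta); auto using sqerr_nonneg).
  assert (HET : E T = 0).
  { apply Rle_antisym; [|apply HE]. unfold loss in Hloss. rewrite <- Hloss.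
    apply (rsum_term_le E); auto. }
  exact (expect_eq0_pointwise delta delta _ (Hlip T) (fun q => sqerr_nonneg _ _ _ _ _ q T)
    HET p Hp).
Qed.

Lemma Cconj_RtoC a : Cconj (RtoC a) = RtoC a.
Proof. unfold Cconj, RtoC; simpl. f_equal; ring. Qed.

Definition phase (p : nat -> R) (T r t j : nat) : R :=
  (INR t - 1 - (INR T - 2)) * angle p j + (INR t - 1) * angle p r.

Lemma model_expand d H A B P p T r : (2 <= T)%nat ->
  model d H A B P p T r =
  csum (fun t => csum (fun j =>
    Cmult (RtoC (P (T - 1)%nat t * Cmat H A B r j)) (cis (phase p T r t j))) 1 d) 1 T.
Proof.
  intros HT. unfold model, cinner.
  rewrite (csum_ext _ (fun h => csum (fun t => csum (fun j =>
    Cmult (RtoC (P (T - 1)%nat t * (B h r * A h j))) (cis (phase p T r t j))) 1 d) 1 T)).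
  - rewrite csum_comm. apply csum_ext; intros t _. rewrite csum_comm.
    apply csum_ext; intros j _. unfold Cmat.
    rewrite csum_mult_r, RtoC_mult, RtoC_rsum, <- csum_mult_l.
    f_equal. apply csum_ext; intros h _. now rewrite RtoC_mult.
  - intros h _. apply csum_ext; intros t Ht.
    rewrite <- csum_mult_l, <- csum_mult_r. apply csum_ext; intros j _.
    unfold e. rewrite !lam_cis, !cis_pow_n, Cmult_conj, Cconj_RtoC, cis_conj.
    replace (cis (phase p T r t j)) with (Cmult (Cmult (cis (INR (t - 1) * angle p j))
      (cis (- (INR (T - 1 - 1) * angle p j)))) (cis (INR (t - 1) * angle p r))).
    + rewrite !RtoC_mult. ring.
    + rewrite !cis_add. unfold phase. f_equal. rewrite !minus_INR by lia. simpl. ring.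
Qed.

Lemma csum_pow_n_geom (w : C) n :
  Cmult (Cminus w (RtoC 1)) (csum (fun s => pow_n w s) 0 n) = Cminus (pow_n w (S n)) (RtoC 1).
Proof.
  induction n as [|n IH].
  - rewrite csum_n_n. simpl. change (@one C_Ring) with (RtoC 1).
    change (@mult C_Ring w (RtoC 1)) with (Cmult w (RtoC 1)). ring.
  - rewrite csum_n_Sm by lia. change (pow_n w (S (S n))) with (Cmult w (pow_n w (S n))).
    transitivity (Cplus (Cmult (Cminus w 1) (csum (fun s => pow_n w s) 0 n))
                        (Cmult (Cminus w 1) (pow_n w (S n)))); [ring|].
    rewrite IH. ring.
Qed.

Lemma cis_root_of_unity_neq1 q N : (0 < N)%nat -> q <> 0%Z -> (Z.abs q < Z.of_nat N)%Z ->
  cis (IZR q * (2 * PI) / INR N) <> RtoC 1.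
Proof.
  intros HN Hq HqN Hc. pose proof PI_RGT_0.
  assert (HNr : 0 < INR N) by (apply lt_0_INR; lia).
  assert (Hsin : sin (IZR q * (2 * PI) / INR N) = 0) by exact (f_equal snd Hc).
  assert (Hcos : cos (IZR q * (2 * PI) / INR N) = 1) by exact (f_equal fst Hc).
  destruct (sin_eq_0_0 _ Hsin) as [k Hk].
  assert (Hkq : IZR (2 * q) = IZR (k * Z.of_nat N)).
  { rewrite !mult_IZR, <- INR_IZR_INZ.
    apply Rmult_eq_reg_r with (PI / INR N); [|apply Rgt_not_eq, Rdiv_lt_0_compat; lra].
    replace (IZR 2 * IZR q * (PI / INR N)) with (IZR q * (2 * PI) / INR N) by (simpl; field; lra).
    rewrite Hk. field; lra. }
  apply eq_IZR in Hkq.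
  assert (Hk1 : k = 1%Z \/ k = (-1)%Z) by nia.
  rewrite Hk in Hcos. destruct Hk1 as [-> | ->]; simpl in Hcos.
  - rewrite Rmult_1_l, cos_PI in Hcos. lra.
  - replace (-1 * PI) with (- PI) in Hcos by ring. rewrite cos_neg, cos_PI in Hcos. lra.
Qed.

Definition sample (N s : nat) : R := 2 * PI * INR s / INR N.

(* The [m]-th Fourier coefficient of [G] on the circle, computed from [N] equally spaced
   samples; it is exact on [cis (IZR n * x)] whenever [|n - m| < N] ([dft_cis]). *)
Definition dft (N : nat) (m : Z) (G : R -> C) : C :=
  Cmult (RtoC (/ INR N))
    (csum (fun s => Cmult (G (sample N s)) (cis (- IZR m * sample N s))) 0 (N - 1)).

Lemma sample_range N s : (s <= N - 1)%nat -> 0 <= sample N s <= 2 * PI.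
Proof.
  intros Hs. unfold sample. pose proof PI_RGT_0. pose proof (pos_INR s).
  destruct N as [|N]; [simpl; unfold Rdiv; rewrite Rinv_0, Rmult_0_r; lra|].
  assert (0 < INR (S N)) by apply lt_0_INR, Nat.lt_0_succ.
  assert (INR s <= INR (S N)) by (apply le_INR; lia).
  split; [apply Rmult_le_pos; [nra|apply Rlt_le, Rinv_0_lt_compat; lra]|].
  apply Rle_trans with (2 * PI * INR (S N) / INR (S N)); [|right; field; lra].
  apply Rmult_le_compat_r; [apply Rlt_le, Rinv_0_lt_compat; lra|nra].
Qed.

Lemma dft_ext N m G G' : (forall x, 0 <= x <= 2 * PI -> G x = G' x) -> dft N m G = dft N m G'.
Proof.
  intros HG. unfold dft. f_equal. apply csum_ext; intros s Hs.
  rewrite HG; [reflexivity|apply sample_range; lia].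
Qed.

Lemma dft_csum N m (F : nat -> R -> C) a b :
  dft N m (fun x => csum (fun k => F k x) a b) = csum (fun k => dft N m (F k)) a b.
Proof.
  unfold dft. rewrite csum_mult_l. f_equal. rewrite <- csum_comm.
  apply csum_ext; intros. now rewrite csum_mult_r.
Qed.

Lemma dft_scal N m c G : dft N m (fun x => Cmult c (G x)) = Cmult c (dft N m G).
Proof.
  unfold dft. rewrite <- csum_mult_l, <- !csum_mult_l. f_equal.
  apply functional_extensionality; intros s. ring.
Qed.

Lemma dft_plus N m F G :
  dft N m (fun x => Cplus (F x) (G x)) = Cplus (dft N m F) (dft N m G).
Proof.
  unfold dft. rewrite <- Cmult_plus_distr_l, <- csum_plus. f_equal.
  apply csum_ext; intros; ring.
Qed.

Lemma dft_zero N m : dft N m (fun _ => RtoC 0) = RtoC 0.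
Proof. unfold dft. rewrite csum_zero; [ring|intros; ring]. Qed.

Lemma dft_cis N m n : (0 < N)%nat -> (Z.abs (n - m) < Z.of_nat N)%Z ->
  dft N m (fun x => cis (IZR n * x)) = if Z.eqb n m then RtoC 1 else RtoC 0.
Proof.
  intros HN Hnm. unfold dft. pose proof PI_RGT_0.
  assert (HNr : 0 < INR N) by (apply lt_0_INR; lia).
  set (w := cis (IZR (n - m) * (2 * PI) / INR N)).
  rewrite (csum_ext _ (fun s => pow_n w s)).
  2:{ intros s _. unfold w. rewrite cis_pow_n, cis_add. f_equal.
      unfold sample. rewrite minus_IZR. field. lra. }
  destruct (Z.eqb_spec n m) as [->|Hne].
  - rewrite (csum_ext _ (fun _ => RtoC 1)).
    + rewrite <- RtoC_rsum. unfold rsum. rewrite sum_n_m_const, <- RtoC_mult.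
      replace (S (N - 1) - 0)%nat with N by lia. f_equal. field. lra.
    + intros s _. unfold w. rewrite Z.sub_diag, Rmult_0_l, Rdiv_0_l, cis_pow_n, Rmult_0_r.
      apply cis_0.
  - assert (Hw : Cminus w (RtoC 1) <> RtoC 0).
    { intros Hc. apply (cis_root_of_unity_neq1 (n - m) N); auto; [lia|].
      fold w. replace w with (Cplus (Cminus w (RtoC 1)) (RtoC 1)) by ring. rewrite Hc. ring. }
    assert (HwN : pow_n w N = RtoC 1).
    { unfold w. rewrite cis_pow_n, <- (cis_IZR_mul_2PI (n - m)). f_equal. field. lra. }
    assert (Hgeom := csum_pow_n_geom w (N - 1)).
    replace (S (N - 1)) with N in Hgeom by lia.
    replace (csum (fun s => pow_n w s) 0 (N - 1))
      with (Cmult (Cinv (Cminus w (RtoC 1)))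
              (Cmult (Cminus w (RtoC 1)) (csum (fun s => pow_n w s) 0 (N - 1))))
      by (field; exact Hw).
    rewrite Hgeom, HwN. ring.
Qed.

(* Columns outside the conjugate pair of [r], stripped of the factors that depend on the
   angle of that pair. *)
Definition off_pair (d H : nat) (A B : nat -> nat -> R) (T r : nat) (p : nat -> R) (t : nat) : C :=
  csum (fun j => if Nat.eqb (pair_idx j) (pair_idx r) then RtoC 0
    else Cmult (RtoC (Cmat H A B r j)) (cis ((INR t - 1 - (INR T - 2)) * angle p j))) 1 d.

Ltac IZR_to_INR :=
  repeat first [rewrite mult_IZR | rewrite minus_IZR | rewrite plus_IZR | rewrite opp_IZR];
  rewrite <- ?INR_IZR_INZ.

Ltac decide_Zeqb := repeat match goal with
  | |- context [Z.eqb ?a ?b] =>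
      let Hab := fresh "Hab" in destruct (Z.eqb_spec a b) as [Hab|Hab]; try (exfalso; lia)
  end.

Section Row.
Variables (delta H : nat) (A B P : nat -> nat -> R) (T r : nat).
Hypotheses (HT : (2 <= T)%nat) (Hr : (1 <= r <= 2 * delta)%nat).

Local Notation Pt t := (P (T - 1)%nat t).
Local Notation Cr j := (Cmat H A B r j).
Local Notation kr := (pair_idx r).
Local Notation sr := (sgn r).
Local Notation off := (off_pair (2 * delta) H A B T r).

Lemma model_row_expand p x :
  model (2 * delta) H A B P (upd p kr x) T r =
  csum (fun t =>
    Cplus (Cmult (RtoC (Pt t * Cr r)) (cis (IZR (sr * (2 * Z.of_nat t - Z.of_nat T)) * x)))
    (Cplus (Cmult (RtoC (Pt t * Cr (mate r))) (cis (IZR (sr * (Z.of_nat T - 2)) * x)))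
           (Cmult (Cmult (RtoC (Pt t)) (off p t)) (cis (IZR (sr * (Z.of_nat t - 1)) * x))))) 1 T.
Proof.
  rewrite model_expand by exact HT. apply csum_ext; intros t Ht.
  rewrite (csum_split_pair _ delta r Hr). f_equal; [|f_equal].
  - unfold phase. rewrite !angle_upd_same by reflexivity. f_equal. f_equal.
    IZR_to_INR. ring.
  - unfold phase.
    rewrite !angle_upd_same, sgn_mate by (reflexivity || lia || apply pair_idx_mate; lia).
    f_equal. f_equal. IZR_to_INR. ring.
  - unfold off_pair. rewrite <- csum_mult_l, <- csum_mult_r. apply csum_ext; intros j _.
    destruct (Nat.eqb_spec (pair_idx j) kr) as [|Hj]; [ring|].
    unfold phase. rewrite (angle_upd_same p kr x r), (angle_upd_other p kr x j) by easy.
    rewrite <- cis_add, RtoC_mult. IZR_to_INR.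
    replace (IZR sr * (INR t - 1) * x) with ((INR t - 1) * (IZR sr * x)) by ring. ring.
Qed.

Hypothesis Hid : forall p, angles delta p -> model (2 * delta) H A B P p T r = e p (T + 1) r.

Lemma target_upd p x : e (upd p kr x) (T + 1) r = cis (IZR (sr * Z.of_nat T) * x).
Proof.
  unfold e. rewrite lam_cis, cis_pow_n, angle_upd_same by reflexivity.
  f_equal. replace (T + 1 - 1)%nat with T by lia. IZR_to_INR. ring.
Qed.

Lemma row_coefficients p m : angles delta p -> (Z.abs m <= Z.of_nat T)%Z ->
  csum (fun t =>
    Cplus (if Z.eqb (2 * Z.of_nat t - Z.of_nat T) m then RtoC (Pt t * Cr r) else RtoC 0)
    (Cplus (if Z.eqb (Z.of_nat T - 2) m then RtoC (Pt t * Cr (mate r)) else RtoC 0)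
           (if Z.eqb (Z.of_nat t - 1) m then Cmult (RtoC (Pt t)) (off p t) else RtoC 0))) 1 T
  = if Z.eqb (Z.of_nat T) m then RtoC 1 else RtoC 0.
Proof.
  intros Hp Hm. set (N := (2 * T + 1)%nat).
  assert (HN : (0 < N)%nat) by lia.
  assert (Hband : forall a, (Z.abs a <= Z.of_nat T)%Z -> (Z.abs (sr * a - sr * m) < Z.of_nat N)%Z)
    by (intros; unfold N; destruct (sgn_cases r) as [-> | ->]; lia).
  assert (Hdft := dft_ext N (sr * m) _ _
    (fun x Hx => Hid (upd p kr x) (angles_upd delta p kr x Hp (pair_idx_range delta r Hr) Hx))).
  rewrite (dft_ext N (sr * m) (fun x => e _ _ _) _ (fun x _ => target_upd p x)),
    dft_cis, Z_eqb_sgn_mul in Hdft by (auto; apply Hband; lia).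
  rewrite <- Hdft, (dft_ext N (sr * m) _ _ (fun x _ => model_row_expand p x)), dft_csum.
  apply csum_ext; intros t Ht.
  rewrite !dft_plus, !dft_scal, !dft_cis, !Z_eqb_sgn_mul by (auto; apply Hband; lia).
  repeat match goal with |- context [if ?b then _ else _] => destruct b end; ring.
Qed.

Lemma row_diag : Pt T * Cr r = 1.
Proof.
  pose proof (row_coefficients (fun _ => 0) (Z.of_nat T) (angles_zero delta) ltac:(lia)) as E.
  rewrite Z.eqb_refl, (csum_single _ 1 T T) in E.
  - apply RtoC_inj. rewrite <- E. decide_Zeqb. ring.
  - lia.
  - intros t Ht Hne. decide_Zeqb. ring.
Qed.

Lemma off_pair_at_T p : angles delta p -> off p T = RtoC 0.
Proof.
  intros Hp. pose proof (row_coefficients p (Z.of_nat T - 1) Hp ltac:(lia)) as E.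
  rewrite (csum_single _ 1 T T) in E.
  - revert E. decide_Zeqb. intros E.
    assert (HPT : Pt T <> 0) by (pose proof row_diag; intros Hc; rewrite Hc in *; lra).
    replace (off p T) with (Cmult (RtoC (/ Pt T)) (Cmult (RtoC (Pt T)) (off p T)))
      by (rewrite Cmult_assoc, <- RtoC_mult, Rinv_l by exact HPT; ring).
    replace (Cmult (RtoC (Pt T)) (off p T)) with (RtoC 0) by (rewrite <- E; ring). ring.
  - lia.
  - intros t Ht Hne. decide_Zeqb. ring.
Qed.

(* Second extraction, in the angle [x] of the pair [l] of [j0], with all other angles 0. *)
Lemma row_off_pair j0 : (1 <= j0 <= 2 * delta)%nat -> pair_idx j0 <> kr -> Cr j0 = 0.
Proof.
  intros Hj0 Hk0. set (l := pair_idx j0).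
  set (freq j := if Nat.eqb (pair_idx j) l then sgn j else 0%Z).
  assert (Hdft : dft 3 (sgn j0) (fun x => off (upd (fun _ => 0) l x) T) = RtoC 0).
  { rewrite (dft_ext 3 _ _ (fun _ => RtoC 0)); [apply dft_zero|].
    intros x Hx. apply off_pair_at_T, angles_upd;
      [apply angles_zero|now apply pair_idx_range|exact Hx]. }
  rewrite (dft_ext 3 _ _ (fun x => csum (fun j => Cmult
      (if Nat.eqb (pair_idx j) kr then RtoC 0 else RtoC (Cr j)) (cis (IZR (freq j) * x)))
      1 (2 * delta)))
    in Hdft.
  2:{ intros x _. unfold off_pair. apply csum_ext; intros j _.
      destruct (Nat.eqb (pair_idx j) kr); [ring|]. f_equal. f_equal.
      unfold freq, angle, upd. destruct (Nat.eqb (pair_idx j) l); ring. }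
  rewrite dft_csum, (csum_single _ 1 (2 * delta) j0) in Hdft; [| lia |].
  - rewrite dft_scal, dft_cis in Hdft by (lia || (unfold freq; rewrite Nat.eqb_refl; lia)).
    unfold freq in Hdft. rewrite Nat.eqb_refl, Z.eqb_refl in Hdft.
    destruct (Nat.eqb_spec (pair_idx j0) kr); [contradiction|].
    apply RtoC_inj. rewrite <- Hdft. ring.
  - intros j Hj Hne. rewrite dft_scal, dft_cis.
    + unfold freq. destruct (Nat.eqb_spec (pair_idx j) kr); [ring|].
      destruct (Nat.eqb_spec (pair_idx j) l) as [Hjl|].
      * destruct (Z.eqb_spec (sgn j) (sgn j0)); [|ring].
        exfalso. apply Hne, pair_idx_sgn_inj; auto; lia.
      * destruct (Z.eqb_spec 0 (sgn j0)); [destruct (sgn_cases j0); lia|ring].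
    + lia.
    + unfold freq. destruct (Nat.eqb (pair_idx j) l); [destruct (sgn_cases j) as [-> | ->]|];
        destruct (sgn_cases j0) as [-> | ->]; simpl; lia.
Qed.

Lemma off_pair_zero p t : off p t = RtoC 0.
Proof.
  apply csum_zero. intros j Hj. destruct (Nat.eqb_spec (pair_idx j) kr); [reflexivity|].
  rewrite row_off_pair by assumption. ring.
Qed.

Lemma row_early t0 : (1 <= t0 < T - 1)%nat -> Pt t0 = 0.
Proof.
  intros Ht0.
  pose proof (row_coefficients (fun _ => 0) (2 * Z.of_nat t0 - Z.of_nat T) (angles_zero delta)
    ltac:(lia)) as E.
  rewrite (csum_single _ 1 T t0) in E.
  - rewrite off_pair_zero in E. revert E. decide_Zeqb. intros E.
    assert (Hdiag : Cr r <> 0) by (pose proof row_diag; intros Hc; rewrite Hc in *; lra).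
    apply (Rmult_eq_reg_r (Cr r)); [|exact Hdiag].
    rewrite Rmult_0_l. apply RtoC_inj. rewrite <- E. ring.
  - lia.
  - intros t Ht Hne. rewrite off_pair_zero. decide_Zeqb; ring.
Qed.

Lemma row_mate : Pt T * Cr (mate r) + (Cr r + Cr (mate r)) * Pt (T - 1)%nat = 0.
Proof.
  pose proof (row_coefficients (fun _ => 0) (Z.of_nat T - 2) (angles_zero delta) ltac:(lia)) as E.
  rewrite (csum_ext _ (fun t => Cplus
      (if Nat.eqb t (T - 1) then RtoC (Pt (T - 1)%nat * (Cr r + Cr (mate r))) else RtoC 0)
      (if Nat.eqb t T then RtoC (Pt T * Cr (mate r)) else RtoC 0))) in E.
  - rewrite csum_plus, (csum_single _ 1 T (T - 1)), (csum_single _ 1 T T), !Nat.eqb_refl in E.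
    + destruct (Nat.eqb_spec (T - 1) T); [lia|]. revert E. decide_Zeqb. intros E.
      apply RtoC_inj. rewrite <- E, <- RtoC_plus. f_equal. ring.
    + lia.
    + intros t _ Hne. now destruct (Nat.eqb_spec t T).
    + lia.
    + intros t _ Hne. now destruct (Nat.eqb_spec t (T - 1)).
  - intros t Ht. rewrite off_pair_zero.
    destruct (Nat.eqb_spec t (T - 1)) as [->|]; [|destruct (Nat.eqb_spec t T) as [->|]].
    + destruct (Nat.eqb_spec (T - 1) T); [lia|]. decide_Zeqb.
      rewrite Rmult_plus_distr_l, RtoC_plus. ring.
    + decide_Zeqb. ring.
    + rewrite row_early by lia. decide_Zeqb. rewrite Rmult_0_l. ring.
Qed.

End Row.

Lemma zero_loss_row delta H Tmax A B P T r :
  loss delta H Tmax A B P = 0 -> (2 <= T <= Tmax)%nat -> (1 <= r <= 2 * delta)%nat ->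
  (forall t, (1 <= t < T - 1)%nat -> P (T - 1)%nat t = 0) /\
  P (T - 1)%nat T * Cmat H A B r r = 1 /\
  P (T - 1)%nat T * Cmat H A B r (mate r)
    + (Cmat H A B r r + Cmat H A B r (mate r)) * P (T - 1)%nat (T - 1)%nat = 0 /\
  (forall j, (1 <= j <= 2 * delta)%nat -> pair_idx j <> pair_idx r -> Cmat H A B r j = 0).
Proof.
  intros Hloss HT Hr.
  assert (HT2 : (2 <= T)%nat) by lia.
  assert (Hid := fun p Hp => zero_loss_model_eq delta H Tmax A B P Hloss T HT p Hp r Hr).
  repeat split.
  - exact (row_early delta H A B P T r HT2 Hr Hid).
  - exact (row_diag delta H A B P T r HT2 Hr Hid).
  - exact (row_mate delta H A B P T r HT2 Hr Hid).
  - exact (row_off_pair delta H A B P T r HT2 Hr Hid).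
Qed.

Theorem proposition6 (delta H Tmax : nat) (A B P : nat -> nat -> R) :
  (1 <= delta)%nat -> (1 <= H)%nat -> (2 <= Tmax)%nat ->
  loss delta H Tmax A B P = 0 ->
  forall T : nat, (2 <= T <= Tmax)%nat ->
    (forall t : nat, (1 <= t < T - 1)%nat -> P (T - 1)%nat t = 0) /\
    (forall i : nat, (1 <= i <= 2 * delta)%nat -> P (T - 1)%nat T * Cmat H A B i i = 1) /\
    (forall i : nat, (1 <= i <= delta)%nat ->
       P (T - 1)%nat T * Cmat H A B (2 * i - 1) (2 * i)
         + (Cmat H A B (2 * i - 1) (2 * i - 1) + Cmat H A B (2 * i - 1) (2 * i))
           * P (T - 1)%nat (T - 1)%nat = 0 /\
       P (T - 1)%nat T * Cmat H A B (2 * i) (2 * i - 1)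
         + (Cmat H A B (2 * i) (2 * i) + Cmat H A B (2 * i) (2 * i - 1))
           * P (T - 1)%nat (T - 1)%nat = 0) /\
    (forall i j : nat, (1 <= i <= delta)%nat -> (1 <= j <= 2 * delta)%nat ->
       j <> (2 * i - 1)%nat -> j <> (2 * i)%nat ->
       Cmat H A B (2 * i - 1) j = 0 /\ Cmat H A B (2 * i) j = 0).
Proof.
  intros Hdelta _ _ Hloss T HT.
  assert (Hrow := fun r => zero_loss_row delta H Tmax A B P T r Hloss HT).
  split; [|split; [|split]].
  - destruct (Hrow 1%nat ltac:(lia)) as [Hearly _]. exact Hearly.
  - intros i Hi. now destruct (Hrow i Hi) as (_ & Hdiag & _).
  - intros i Hi.
    destruct (Hrow (2 * i - 1)%nat ltac:(lia)) as (_ & _ & Hodd & _).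
    destruct (Hrow (2 * i)%nat ltac:(lia)) as (_ & _ & Heven & _).
    rewrite mate_pred_double in Hodd by lia. rewrite mate_even in Heven. now split.
  - intros i j Hi Hj Hodd Heven.
    destruct (Hrow (2 * i - 1)%nat ltac:(lia)) as (_ & _ & _ & Hoff_odd).
    destruct (Hrow (2 * i)%nat ltac:(lia)) as (_ & _ & _ & Hoff_even).
    rewrite pair_idx_pred_double in Hoff_odd by lia. rewrite pair_idx_even in Hoff_even.
    pose proof (pair_idx_neq j i ltac:(lia) Hodd Heven). split; auto.
Qed.
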